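(* Let $p$ be an odd prime. If $G$ is a quasi-powerful $p$-group then $G^{p}$ is powerful.
   Context: For an odd prime $p$, a finite $p$-group $G$ is powerful if $[G,G]\le G^{p}$, where $G^{p}=\langle g^{p}\mid g\in G\rangle$, and $G$ is quasi-powerful if $G/Z(G)$ is powerful. *)

From mathcomp Require Import all_boot all_fingroup all_solvable.
Set Implicit Arguments. Unset Strict Implicit. Unset Printing Implicit Defensive.
Local Open Scope group_scope.

Definition pow_subgroup (gT : finGroupType) (p : nat) (G : {set gT}) : {set gT} :=
  <<[set x ^+ p | x in G]>>.

(* G is powerful (p odd): [G,G] <= G^p *)
Definition powerful (gT : finGroupType) (p : nat) (G : {set gT}) : bool :=
  [~: G, G] \subset pow_subgroup p G.

Definition quasi_powerful (gT : finGroupType) (p : nat) (G : {group gT}) : bool :=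
  powerful p (G / 'Z(G)).

From mathcomp Require Import all_boot all_fingroup all_solvable.
Set Implicit Arguments. Unset Strict Implicit. Unset Printing Implicit Defensive.
Local Open Scope group_scope.

(* Write H = G^p and N = H^p; quasi-powerfulness says [G, G] <= Z(G) H.
   For odd p the identity [x^p, y] = [x, y]^p [x, y, x]^C(p,2) shows that in
   a nilpotent group Q whose derived subgroup lies in Q^p, and with Q^p of
   exponent p, the subgroup Q^p is central.  Applied to G / N Z(G) this gives
   [H, G] <= N Z(G).  Modulo N, every [h, y] with h in H is then a central
   element of the exponent p group H / N, so [h, y^p] = [h, y]^p = 1; as H is
   generated by the y^p, the quotient H / N is abelian, i.e. [H, H] <= N. *)

Section PowSubgroup.

Variables (gT : finGroupType) (p : nat).
Implicit Types (A B : {set gT}) (G H : {group gT}).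

Lemma mem_pow_subgroup A x : x \in A -> x ^+ p \in pow_subgroup p A.
Proof. by move=> Ax; apply/mem_gen/imset_f. Qed.

Lemma pow_subgroup_subG A H :
  {in A, forall x, x ^+ p \in H} -> pow_subgroup p A \subset H.
Proof.
by move=> AH; rewrite gen_subG; apply/subsetP=> _ /imsetP[x /AH Hx ->].
Qed.

Lemma pow_subgroup_sub G : pow_subgroup p G \subset G.
Proof. by apply: pow_subgroup_subG => x Gx; rewrite groupX. Qed.

Lemma pow_subgroup_norms A B :
  B \subset 'N(A) -> B \subset 'N(pow_subgroup p A).
Proof.
move=> nAB; apply: subset_trans (norm_gen _).
apply/subsetP=> y /(subsetP nAB) nAy.
rewrite inE; apply/subsetP=> _ /imsetP[_ /imsetP[x Ax ->] ->].
by rewrite conjXg; apply: imset_f; rewrite memJ_norm.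
Qed.

Lemma pow_subgroup_norm G : G \subset 'N(pow_subgroup p G).
Proof. exact/pow_subgroup_norms/normG. Qed.

Lemma quotient_pow_subgroup A H :
  A \subset 'N(H) -> pow_subgroup p A / H = pow_subgroup p (A / H).
Proof.
move=> nHA; have nHAp : [set x ^+ p | x in A] \subset 'N(H).
  by apply/subsetP=> _ /imsetP[x /(subsetP nHA) Nx ->]; rewrite groupX.
rewrite /pow_subgroup quotient_gen // /quotient !morphimEsub // -!imset_comp.
by congr <<_>>; apply: eq_in_imset => x /(subsetP nHA) Nx /=; rewrite morphX.
Qed.

Lemma exponent_quotient_pow_subgroup G H :
  G \subset 'N(H) -> pow_subgroup p G \subset H -> exponent (G / H) %| p.
Proof.
move=> nHG sGpH; apply/exponentP=> _ /morphimP[x Nx Gx ->].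
by rewrite -morphX //= coset_id // (subsetP sGpH) ?mem_pow_subgroup.
Qed.

End PowSubgroup.

Lemma commXg_Rmul (gT : finGroupType) (x y : gT) n :
    commute x [~ x, y, x] -> commute [~ x, y] [~ x, y, x] ->
  [~ x ^+ n, y] = [~ x, y] ^+ n * [~ x, y, x] ^+ 'C(n, 2).
Proof.
move=> cxd ccd.
by rewrite [LHS]commgEl conjXg conjg_mulR expMg_Rmul // -mulgA mulKg.
Qed.

Section CentralPowSubgroup.

Variables (gT : finGroupType) (p : nat) (Q : {group gT}).
Let M := pow_subgroup p Q.
Hypotheses (expM : exponent M %| p) (cMQ : [~: M, Q] \subset 'C(Q)).

Lemma pow_subgroup_abelian : abelian M.
Proof.
have sKM : [~: M, Q] \subset M by rewrite commg_subl pow_subgroup_norm.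
apply: pow_subgroup_subG => y Qy; apply/centP=> h Mh; apply/commute_sym/commgP.
have Kc : [~ h, y] \in [~: M, Q] by apply: mem_commg.
rewrite commgX; first by rewrite (exponentP expM) ?(subsetP sKM).
exact: commute_sym (centP (subsetP cMQ _ Kc) y Qy).
Qed.

Lemma pow_subgroup_cent : odd p -> [~: Q, Q] \subset M -> M \subset 'C(Q).
Proof.
move=> odd_p sQ'M; apply: pow_subgroup_subG => x Qx; apply/centP=> y Qy.
apply/commgP; set c := [~ x, y]; set d := [~ c, x].
have Mc : c \in M by rewrite (subsetP sQ'M) ?mem_commg.
have Qc : c \in Q by rewrite (subsetP (pow_subgroup_sub p Q)).
have Kd : d \in [~: M, Q] by rewrite mem_commg.
have Md : d \in M.
  by rewrite (subsetP sQ'M) // (subsetP (commSg _ (pow_subgroup_sub p Q))).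
have cQd : d \in 'C(Q) by rewrite (subsetP cMQ).
rewrite commXg_Rmul; try exact: commute_sym (centP cQd _ _).
by rewrite bin2odd // expgM !(exponentP expM) // expg1n mulg1.
Qed.

End CentralPowSubgroup.

Lemma pow_subgroup_cent_nil (gT : finGroupType) (p : nat) (Q : {group gT}) :
    odd p -> nilpotent Q -> [~: Q, Q] \subset pow_subgroup p Q ->
    exponent (pow_subgroup p Q) %| p ->
  pow_subgroup p Q \subset 'C(Q).
Proof.
set M := pow_subgroup p Q => odd_p nilQ sQ'M expM.
apply/commG1P/eqP/idPn=> ntK.
have sMQ : M \subset Q := pow_subgroup_sub p Q.
have sKQ : [~: M, Q] \subset Q by rewrite commg_subr (subset_trans sMQ) ?normG.
have nKQ : Q \subset 'N_Q([~: M, Q]) by rewrite subsetI subxx commg_normr.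
have := nil_comm_properl nilQ sKQ ntK nKQ; set K2 := [~: _, Q] => ltK2K.
(* Modulo K2 the commutator [~: M, Q] becomes central, so the previous lemma
   applies to Q / K2 and yields [~: M, Q] <= K2. *)
have nK2Q : Q \subset 'N(K2) := commg_normr Q _.
have nK2M : M \subset 'N(K2) := subset_trans sMQ nK2Q.
have : pow_subgroup p (Q / K2) \subset 'C(Q / K2).
  apply: pow_subgroup_cent => //; rewrite -quotient_pow_subgroup //.
  - exact: dvdn_trans (exponent_quotient _ _) expM.
  - by rewrite -quotientR // quotient_cents2r.
  - by rewrite -quotientR // quotientS.
rewrite -quotient_pow_subgroup // quotient_cents2 // => sKK2.
by move: ltK2K; rewrite properE sKK2 andbF.
Qed.

Section QuasiPowerful.

Variables (gT : finGroupType) (p : nat) (G : {group gT}).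
Let H := pow_subgroup p G.
Let N := pow_subgroup p H.

Lemma quasi_powerfulE : quasi_powerful p G = ([~: G, G] \subset 'Z(G) * H).
Proof.
have nZG : G \subset 'N('Z(G)) := normal_norm (center_normal G).
rewrite /quasi_powerful /powerful -quotient_pow_subgroup // -quotientR //.
by rewrite quotientSK // (subset_trans (der_sub 1 G) nZG).
Qed.

Lemma quasi_powerful_commR :
    odd p -> p.-group G -> quasi_powerful p G ->
  [~: H, G] \subset N <*> 'Z(G).
Proof.
move=> odd_p pG; rewrite quasi_powerfulE => sG'ZH.
have nHG : G \subset 'N(H) := pow_subgroup_norm p G.
have nLG : G \subset 'N(N <*> 'Z(G)).
  by rewrite normsY ?pow_subgroup_norms ?normal_norm ?center_normal.
have nLH : H \subset 'N(N <*> 'Z(G)).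
  exact: subset_trans (pow_subgroup_sub p G) nLG.
rewrite -quotient_cents2 // quotient_pow_subgroup //.
apply: pow_subgroup_cent_nil => //; first exact/quotient_nil/(pgroup_nil pG).
  rewrite -quotient_pow_subgroup // -quotientR // quotientSK.
    exact: subset_trans sG'ZH (mulSg _ (joing_subr _ _)).
  exact: subset_trans (der_sub 1 G) nLG.
by rewrite -quotient_pow_subgroup // exponent_quotient_pow_subgroup ?joing_subl.
Qed.

Lemma pow_subgroup_powerful : [~: H, G] \subset N <*> 'Z(G) -> powerful p H.
Proof.
move=> sHGL.
have nNG : G \subset 'N(N) := pow_subgroup_norms p (pow_subgroup_norm p G).
have nNH : H \subset 'N(N) := subset_trans (pow_subgroup_sub p G) nNG.
apply: (der1_min nNH); rewrite /H quotient_pow_subgroup //.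
apply: pow_subgroup_abelian.
  by rewrite -quotient_pow_subgroup // exponent_quotient_pow_subgroup.
rewrite -quotient_pow_subgroup // -quotientR //.
apply: subset_trans (quotientS _ sHGL) _.
rewrite quotientYidl ?(subset_trans (center_sub G)) //.
exact/quotient_cents/subsetIr.
Qed.

End QuasiPowerful.

Theorem theorem4p9 (gT : finGroupType) (p : nat) (G : {group gT}) :
  prime p -> odd p -> p.-group G -> quasi_powerful p G ->
  powerful p (pow_subgroup p G).
Proof.
move=> _ odd_p pG /(quasi_powerful_commR odd_p pG).
exact: pow_subgroup_powerful.
Qed.
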